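(* Let $M$ be a regular indecomposable module which is a source module with center $c$ and radius $r$. Then $\sigma M$ is a source module with center $c$ and radius $r+1$.
   Context: Let $k$ be a field and $n\ge 3$. $T(n)$ is the $n$-regular tree; fix a bipartite orientation $\Omega$ (every vertex a sink or a source), $\sigma\Omega$ the opposite orientation. A module is a finite-dimensional $k$-representation of $(T(n),\Omega)$ or $(T(n),\sigma\Omega)$. The shift functor $\sigma$ is the composition of the Bernstein–Gelfand–Ponomarev reflection functors at all sinks, sending representations of $(T(n),\Omega)$ to representations of $(T(n),\sigma\Omega)$ and vice versa. An indecomposable module $M$ is regular if $\sigma^tM\neq 0$ for all $t\in\mathbb Z$ ($\sigma^t$ for $t<0$ being powers of the left adjoint $\sigma^-$). A path of length $t$ is a sequence $(a_0,\dots,a_t)$ of vertices, consecutive ones neighbours, with $a_{i-1}\neq a_{i+1}$; a path of length $2r$ has center $a_r$, radius $r$. For indecomposable $M$, $T(M)$ is the full subgraph on vertices $a$ with $M_a\neq0$; a diameter path is a path in $T(M)$ of maximal length $d(M)$; all diameter paths share a center, the center of $M$; $r(M)=\lfloor d(M)/2\rfloor$. $M$ is a source module if its diameter paths start and end at sources of the orientation of the quiver of which $M$ is a representation. *)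

From HB Require Import structures.
From mathcomp Require Import all_boot all_order all_algebra.
Set Implicit Arguments. Unset Strict Implicit. Unset Printing Implicit Defensive.
Import GRing.Theory.
Local Open Scope ring_scope.

(* The n-regular tree T(n).  Vertices are reduced words over 'I_n (no two  *)
(* consecutive equal letters), i.e. the Cayley graph of the free product   *)
Section Tree.
Variable n : nat.

Definition neqrel : rel 'I_n := fun a b => a != b.
Definition vert := {w : seq 'I_n | sorted neqrel w}.

Definition root : vert := exist _ [::] isT.

(* the i-th neighbour of a vertex; every vertex has exactly n neighbours *)
Definition nbw (a : seq 'I_n) (i : 'I_n) : seq 'I_n :=
  if a is h :: s then (if i == h then s else i :: a) else [:: i].

Lemma nbw_sorted (a : seq 'I_n) (i : 'I_n) :
  sorted neqrel a -> sorted neqrel (nbw a i).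
Proof.
case: a => [|h s] //=.
case: (boolP (i == h)) => [_|ne] H; first exact: path_sorted H.
by rewrite /= H andbT.
Qed.

Definition nb (a : vert) (i : 'I_n) : vert :=
  exist _ (nbw (val a) i) (nbw_sorted i (valP a)).

Definition adj (x y : vert) : bool :=
  ((val x != [::]) && (behead (val x) == val y)) ||
  ((val y != [::]) && (behead (val y) == val x)).

(* Bipartite orientations: in orientation p, the sinks are the vertices
   whose word length has parity p; all other vertices are sources.
   Omega = p, sigma Omega = ~~ p. *)
Definition is_sink (p : bool) (v : vert) : bool := odd (size (val v)) == p.
Definition is_source (p : bool) (v : vert) : bool := ~~ is_sink p v.
Definition arrow (p : bool) (x y : vert) : bool := adj x y && is_sink p y.

(* Representations (row-vector convention: the map M_x -> M_y is a matrix  *)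
(* of size dim x * dim y).  Entries arr x y for non-arrows are ignored by  *)
(* every notion below.                                                     *)
Variable k : fieldType.

Record rep (p : bool) := Rep {
  dim : vert -> nat;
  arr : forall x y : vert, 'M[k]_(dim x, dim y) }.

Definition fin_dim p (M : rep p) : Prop :=
  exists s : seq vert, forall v, dim M v != 0%N -> v \in s.

Definition nonzero p (M : rep p) : Prop := exists v, dim M v != 0%N.

Definition mxe m m' (A : 'M[k]_(m, m')) (r c : nat) : k :=
  match (insub r : option 'I_m), (insub c : option 'I_m') with
  | Some r', Some c' => A r' c'
  | _, _ => 0
  end.

Section Reflection.
Variables (p : bool) (M : rep p).

(* the map  (+)_{b nb of a} M_b -> M_a  (used at sinks) *)
Definition inmap (a : vert) :
  'M[k]_((\sum_(i < n) dim M (nb a i))%N, dim M a) :=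
  \mxcol_(i < n) arr M (nb a i) a.
Definition kerbasis (a : vert) := row_base (kermx (inmap a)).

(* the map  M_a -> (+)_{b nb of a} M_b  (used at sources) *)
Definition outmap (a : vert) :
  'M[k]_(dim M a, (\sum_(i < n) dim M (nb a i))%N) :=
  \mxrow_(i < n) arr M a (nb a i).
(* the cokernel projection (columns span the right null space of outmap) *)
Definition cokproj (a : vert) := (row_base (kermx (outmap a)^T))^T.

(* sigma: BGP reflection at all sinks of p *)
Definition sig_dim (a : vert) : nat :=
  if is_sink p a then \rank (kermx (inmap a)) else dim M a.
Definition sig_arr (x y : vert) : 'M[k]_(sig_dim x, sig_dim y) :=
  \matrix_(r, c)
    (if arrow (~~ p) x y then
       \sum_(i < n | nb x i == y) mxe (submxrow (kerbasis x) i) r c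
     else 0).
Definition sigma : rep (~~ p) := @Rep (~~ p) sig_dim sig_arr.

(* sigma^- : BGP reflection (left adjoint) at all sources of p *)
Definition sigm_dim (a : vert) : nat :=
  if is_source p a then \rank (kermx (outmap a)^T) else dim M a.
Definition sigm_arr (x y : vert) : 'M[k]_(sigm_dim x, sigm_dim y) :=
  \matrix_(r, c)
    (if arrow (~~ p) x y then
       \sum_(i < n | nb y i == x) mxe (submxcol (cokproj y) i) r c
     else 0).
Definition sigmam : rep (~~ p) := @Rep (~~ p) sigm_dim sigm_arr.

End Reflection.

Fixpoint sigma_pow (t : nat) (p : bool) (M : rep p) : rep (iter t negb p) :=
  match t return rep (iter t negb p) with
  | 0 => M
  | t'.+1 => sigma (sigma_pow t' M)
  end.

Fixpoint sigmam_pow (t : nat) (p : bool) (M : rep p) : rep (iter t negb p) :=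
  match t return rep (iter t negb p) with
  | 0 => M
  | t'.+1 => sigmam (sigmam_pow t' M)
  end.

Definition indecomposable p (M : rep p) : Prop :=
  nonzero M /\
  forall U W : forall v, 'M[k]_(dim M v),
    (forall x y, arrow p x y ->
       (U x *m arr M x y <= U y)%MS /\ (W x *m arr M x y <= W y)%MS) ->
    (forall v, (U v :&: W v == (0 : 'M[k]_(dim M v)))%MS &&
               (U v + W v == (1%:M : 'M[k]_(dim M v)))%MS) ->
    (forall v, U v = 0) \/ (forall v, W v = 0).

Definition regular p (M : rep p) : Prop :=
  indecomposable M /\
  forall t : nat, nonzero (sigma_pow t M) /\ nonzero (sigmam_pow t M).

(* paths (a_0, ..., a_t), given as the sequence of vertices; length = size - 1 *)
Definition is_tpath (l : seq vert) : bool :=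
  [&& (0 < size l)%N, sorted adj l &
      all (fun i => nth root l i != nth root l i.+2) (iota 0 (size l).-2)].

Definition path_in p (M : rep p) (l : seq vert) : bool :=
  is_tpath l && all (fun a => dim M a != 0%N) l.

Definition is_diam p (M : rep p) (l : seq vert) : Prop :=
  path_in M l /\ forall l', path_in M l' -> (size l' <= size l)%N.

Definition source_module p (M : rep p) : Prop :=
  [/\ fin_dim M, exists l, is_diam M l &
      forall l, is_diam M l ->
        is_source p (head root l) && is_source p (last root l)].

Definition center_radius p (M : rep p) (c : vert) (r : nat) : Prop :=
  forall l, is_diam M l -> size l = (2 * r).+1 /\ nth root l r = c.

End Tree.

From mathcomp Require Import all_boot all_order all_algebra zify.
Set Implicit Arguments. Unset Strict Implicit. Unset Printing Implicit Defensive.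

(* Only sinks change under sigma.  At a sink b of an indecomposable M with two
   distinct neighbours in T(M), M_b is nonzero and the map (+) M_(nb b i) -> M_b
   is not injective: otherwise the image of one neighbour splits off as a direct
   summand of M_b, and M decomposes along the edge to that neighbour.  Hence
   sigma keeps every vertex of a diameter path l0 of M (whose interior sinks
   all have two neighbours in T(M)), and gains the two sinks adjacent to its
   source ends, giving a path of length d(M) + 2 in T(sigma M).  Conversely the
   interior of any path in T(sigma M) is a path in T(M), so no path is longer,
   and a path of that length consists of a diameter path of M with a sink
   added at each end; its center is the center of M. *)

Lemma suffix_consE (T : eqType) (s t : seq T) x :
  suffix s (x :: t) = (s == x :: t) || suffix s t.
Proof.
apply/idP/idP.
  move/suffixP=> [[|y u] E]; first by rewrite /= in E; rewrite E eqxx.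
  by case: E => _ ->; rewrite suffix_suffix orbT.
case/orP=> [/eqP->|]; first exact: suffix_refl.
by move=> H; apply: suffix_trans H (suffix_cons _ _).
Qed.

Section TreeGeometry.
Variable n : nat.
Implicit Types (x y a b u w : vert n) (l : seq (vert n)).

Lemma adjC x y : adj x y = adj y x.
Proof. by rewrite /adj orbC. Qed.

Lemma adj_cases x y :
  adj x y -> (exists h, val x = h :: val y) \/ (exists h, val y = h :: val x).
Proof.
rewrite /adj; case/orP=> /andP[ne /eqP E].
  by left; case: (val x) ne E => [|h s] //= _ <-; exists h.
by right; case: (val y) ne E => [|h s] //= _ <-; exists h.
Qed.

Lemma adj_parity x y : adj x y -> odd (size (val y)) = ~~ odd (size (val x)).
Proof. by case/adj_cases=> -[h ->] /=; rewrite ?negbK. Qed.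

Lemma adj_neq x y : adj x y -> x != y.
Proof.
by move=> /adj_parity A; apply/eqP=> E; move: A; rewrite E; case: (odd _).
Qed.

Lemma nb_adj x i : adj x (nb x i).
Proof.
rewrite /adj /nb /=; case: x => [[|h s] Hs] //=.
by case: ifP => _ /=; rewrite eqxx ?orbT.
Qed.

Lemma adj_nb x y : adj x y -> exists i, y = nb x i.
Proof.
case: x y => [sx Hx] [sy Hy]; rewrite /adj /=.
case/orP=> /andP[ne /eqP E].
  case: sx Hx ne E => [|h s] Hx //= _ E; exists h; apply: val_inj => /=.
  by rewrite eqxx.
case: sy Hy ne E => [|h s] Hy //= _ E; subst s; exists h; apply: val_inj => /=.
case: sx Hx Hy => [|h' s'] //= _ /andP[ne _].
by rewrite /neqrel in ne; rewrite (negbTE ne).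
Qed.

Lemma nb_inj x : injective (nb x).
Proof.
move=> i j /(congr1 val); case: x => [[|h s] Hs] /=; first by case.
case: (boolP (i == h)) => [/eqP->|ne]; case: (boolP (j == h)) => [/eqP->|ne'] //.
- by move/(congr1 size)=> /=; lia.
- by move/(congr1 size)=> /=; lia.
by case.
Qed.

Lemma exists_nb_neq (hn : 1 < n) x u : exists i, nb x i != u.
Proof.
pose i0 := Ordinal (ltnW hn); pose i1 := Ordinal hn.
case: (eqVneq (nb x i0) u) => [E0|]; last by exists i0.
exists i1; rewrite -E0; apply/eqP => /nb_inj /(congr1 val) /=; lia.
Qed.

Lemma sink_adj p x y : adj x y -> is_sink p y = ~~ is_sink p x.
Proof. by move=> /adj_parity; rewrite /is_sink => ->; case: (odd _); case: p. Qed.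

Lemma is_source_negb p x : is_source (~~ p) x = is_sink p x.
Proof. by rewrite /is_source /is_sink; case: (odd _); case: p. Qed.

Lemma arrow_source p x y : arrow p x y -> is_source p x.
Proof. by case/andP=> /sink_adj ->. Qed.

(* For an edge b - a, [branch b a] is the component of a in the tree with the
   edge removed: the words ending in a if a is farther from the root than b,
   the words not ending in b otherwise. *)
Definition branch b a w : bool :=
  if size (val b) < size (val a) then suffix (val a) (val w)
  else ~~ suffix (val b) (val w).

Lemma branch_self b a : adj b a -> branch b a a.
Proof.
rewrite /branch => /adj_cases[[h Eb]|[h Ea]].
  rewrite Eb /= ltnNge leqnSn /=; apply/negP=> /size_suffix /=; lia.
by rewrite Ea /= ltnSn suffix_refl.
Qed.

Lemma branch_exit b a x y :
  adj b a -> adj x y -> branch b a x -> ~~ branch b a y -> x = a /\ y = b.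
Proof.
rewrite /branch => Hba Hxy.
case: (adj_cases Hba) => [[h Eb]|[h Ea]].
  rewrite Eb /= ltnNge leqnSn /= negbK => Sx Sy.
  case: (adj_cases Hxy) => [[h' Ex]|[h' Ey]].
    by move: Sx; rewrite Ex suffix_consE Sy orbT.
  move: Sy; rewrite Ey suffix_consE (negbTE Sx) orbF => /eqP E.
  by split; apply: val_inj; [case: E | rewrite Eb Ey E].
rewrite Ea /= ltnSn => Sx Sy.
case: (adj_cases Hxy) => [[h' Ex]|[h' Ey]].
  move: Sx; rewrite Ex suffix_consE (negbTE Sy) orbF => /eqP E.
  by split; apply: val_inj; [rewrite Ea Ex E | case: E].
by move: Sy; rewrite Ey suffix_consE Sx orbT.
Qed.

Lemma branch_nb b a c : adj b a -> adj b c -> c != a -> ~~ branch b a c.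
Proof.
rewrite /branch => Hba Hbc ca; case: (adj_cases Hba) => [[h Eb]|[h Ea]].
  rewrite Eb /= ltnNge leqnSn /= negbK.
  case: (adj_cases Hbc) => [[h' Eb']|[h' Ec]].
    by move: ca; rewrite Eb in Eb'; case: Eb' => _ E; rewrite (val_inj E) eqxx.
  by rewrite Ec Eb suffix_cons.
rewrite Ea /= ltnSn; apply/negP=> /suffixP[s Es].
case: (adj_cases Hbc) => [[h' Eb']|[h' Ec]].
  by move: (congr1 size Es); rewrite Eb' size_cat /=; lia.
case: s Es => [|z s] Es.
  by move/eqP: ca; apply; apply: val_inj; rewrite Ea; exact: Es.
by move: (congr1 size Es); rewrite Ec size_cat /=; lia.
Qed.

Lemma tpathP l : is_tpath l <->
  [/\ 0 < size l,
      forall i, i.+1 < size l -> adj (nth (root n) l i) (nth (root n) l i.+1) &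
      forall i, i.+2 < size l -> nth (root n) l i != nth (root n) l i.+2].
Proof.
rewrite /is_tpath; split.
  case/and3P=> s0 /(sortedP (root n)) H /allP A; split=> // i Hi.
  by apply: A; rewrite mem_iota add0n; lia.
case=> s0 H A; rewrite s0 /=; apply/andP; split; first exact/(sortedP (root n)).
by apply/allP=> i; rewrite mem_iota add0n => Hi; apply: A; lia.
Qed.

Lemma tpath_rev l : is_tpath (rev l) = is_tpath l.
Proof.
have tpath_revW (s : seq (vert n)) : is_tpath (rev s) -> is_tpath s.
  move/tpathP=> [s0 H A]; rewrite size_rev in s0 H A.
  apply/tpathP; split=> // i Hi.
    have := H (size s - i.+2) ltac:(lia).
    rewrite !nth_rev; [|lia|lia].
    have -> : (size s - (size s - i.+2).+2 = i)%N by lia.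
    have -> : (size s - (size s - i.+2).+1 = i.+1)%N by lia.
    by rewrite adjC.
  have := A (size s - i.+3) ltac:(lia).
  rewrite !nth_rev; [|lia|lia].
  have -> : (size s - (size s - i.+3).+1 = i.+2)%N by lia.
  have -> : (size s - (size s - i.+3).+3 = i)%N by lia.
  by rewrite eq_sym.
by apply/idP/idP => [/tpath_revW // | T]; apply: tpath_revW; rewrite revK.
Qed.

Lemma tpath_cons b l :
  is_tpath l -> adj b (head (root n) l) ->
  (1 < size l -> b != nth (root n) l 1) -> is_tpath (b :: l).
Proof.
move/tpathP=> [s0 H A] Hb Hne; apply/tpathP; split=> // [[|i]|[|i]] /= Hi.
- exact: Hb.
- exact: H.
- exact: Hne.
exact: A.
Qed.

Lemma tpath_behead x l : is_tpath (x :: l) -> 0 < size l -> is_tpath l.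
Proof.
move/tpathP=> [_ H A] s0; apply/tpathP; split=> // i Hi.
  exact: (H i.+1).
exact: (A i.+1).
Qed.

Lemma tpath_rconsK l y : is_tpath (rcons l y) -> 0 < size l -> is_tpath l.
Proof.
by rewrite -tpath_rev rev_rcons => /tpath_behead; rewrite size_rev tpath_rev.
Qed.

Lemma tpath_nbrs l i :
  is_tpath l -> 0 < i -> i.+1 < size l ->
  [/\ adj (nth (root n) l i) (nth (root n) l i.-1),
      adj (nth (root n) l i) (nth (root n) l i.+1) &
      nth (root n) l i.+1 != nth (root n) l i.-1].
Proof.
move=> /tpathP[_ Ha Hnb] i0 il; split.
- by rewrite adjC; have := Ha i.-1; rewrite prednK //; apply; lia.
- exact: Ha.
by rewrite eq_sym; have := Hnb i.-1; rewrite -(prednK i0); apply; lia.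
Qed.

Lemma tpath_cons_ext (hn : 1 < n) l :
  is_tpath l -> exists2 b, is_tpath (b :: l) & adj (head (root n) l) b.
Proof.
move=> T; have [i Hi] := exists_nb_neq hn (head (root n) l) (nth (root n) l 1).
by exists (nb (head (root n) l) i); [apply: tpath_cons; rewrite // adjC nb_adj|
  exact: nb_adj].
Qed.

Lemma tpath_extend (hn : 1 < n) l :
  is_tpath l -> exists b0 be,
  [/\ is_tpath (b0 :: rcons l be), adj (head (root n) l) b0 &
      adj (last (root n) l) be].
Proof.
move=> T; have [b0 T0 A0] := tpath_cons_ext hn T.
have [be Te Ae] : exists2 be, is_tpath (be :: rev (b0 :: l)) &
    adj (head (root n) (rev (b0 :: l))) be.
  by apply: (tpath_cons_ext hn); rewrite tpath_rev.
exists b0, be; split=> //.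
  by rewrite rev_cons in Te; rewrite -tpath_rev rev_cons rev_rcons.
case/lastP: l T {T0 A0} Te Ae => [|l' z] T _; first by case/tpathP: T.
by rewrite rev_cons rev_rcons last_rcons.
Qed.

End TreeGeometry.

Section Paths.
Variables (n : nat) (k : fieldType) (p : bool) (M : rep n k p).
Implicit Types (x y : vert n) (l m : seq (vert n)).

Lemma path_in_rev l : path_in M (rev l) = path_in M l.
Proof. by rewrite /path_in tpath_rev all_rev. Qed.

Lemma diam_rev l : is_diam M l -> is_diam M (rev l).
Proof.
by case=> Ml lmax; split=> [|l' /lmax]; rewrite ?path_in_rev ?size_rev.
Qed.

Lemma diam_cons_dim0 x l : is_diam M l -> is_tpath (x :: l) -> dim M x = 0%N.
Proof.
case=> /andP[_ Ml] lmax T; apply/eqP; apply: contraT => dx.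
by have /= := lmax (x :: l); rewrite /path_in T /= dx Ml ltnn => /(_ isT).
Qed.

Lemma diam_rcons_dim0 l y : is_diam M l -> is_tpath (rcons l y) -> dim M y = 0%N.
Proof.
move=> /diam_rev ldiam T; apply: diam_cons_dim0 ldiam _.
by rewrite -rev_rcons tpath_rev.
Qed.

End Paths.

Section LinearAlgebra.
Variable F : fieldType.
Local Open Scope ring_scope.

Lemma mxe_id m (X : 'M[F]_m) : \matrix_(r, c) mxe X r c = X.
Proof.
apply/matrixP=> i j; rewrite mxE /mxe.
case: insubP => [i' _ Ei|]; last by rewrite ltn_ord.
case: insubP => [j' _ Ej|]; last by rewrite ltn_ord.
by rewrite (val_inj Ei) (val_inj Ej).
Qed.

Lemma submx_dim0 m : m = 0%N ->
  forall m1 (A : 'M[F]_(m1, m)) m2 (B : 'M[F]_(m2, m)), (A <= B)%MS.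
Proof. by move=> -> m1 A m2 B; rewrite (thinmx0 A) sub0mx. Qed.

Lemma mxrank_sumsmx_leq m (I : finType) (P : pred I)
    (G : I -> 'M[F]_m) :
  (\rank (\sum_(i | P i) G i)%MS <= \sum_(i | P i) \rank (G i))%N.
Proof.
elim/big_rec2: _ => [|i r B Pi IH]; first by rewrite mxrank0.
by apply: leq_trans (mxrank_adds_leqif _ _) _; rewrite leq_add2l.
Qed.

Lemma disjoint_compl m (X O : 'M[F]_m) :
  (X :&: O <= (0 : 'M_m))%MS ->
  exists Y : 'M[F]_m,
    [/\ (O <= Y)%MS, (X :&: Y == (0 : 'M_m))%MS & (X + Y == 1%:M)%MS].
Proof.
move=> XO0; set C := ((X + O)^C)%MS; exists (O + C)%MS.
have full : (1%:M <= X + (O + C))%MS.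
  by rewrite addsmxA sub1mx; exact: addsmx_compl_full.
have rk_full : \rank (X + (O + C))%MS = m.
  by apply/eqP; rewrite eqn_leq rank_leq_col -{1}(mxrank1 F m) mxrankS.
have rk_XO : \rank (X + O)%MS = (\rank X + \rank O)%N.
  by apply: mxrank_disjoint_sum; apply/eqP; rewrite -submx0.
split; [exact: addsmxSl | | by rewrite submx1 full].
rewrite sub0mx andbT -(geq_leqif (mxrank_adds_leqif _ _)) rk_full.
have := mxrank_adds_leqif O C; have := rank_leq_col (X + O)%MS.
by rewrite mxrank_compl rk_XO => ? [? _]; lia.
Qed.

End LinearAlgebra.

Section Indecomposable.
Variables (n : nat) (k : fieldType) (p : bool) (M : rep n k p).
Hypothesis Mind : indecomposable M.
Implicit Types (a b c u w : vert n).
Local Open Scope ring_scope.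

(* A splitting X (+) Y of M_b separating the image of M_a from those of the
   other neighbours extends to a decomposition of M: put all of M on the branch
   through a, X at b, and Y plus the rest of M elsewhere ([mxe] reads X and Y
   at the type of M_v without a cast along v = b). *)
Lemma indecomposable_sink_split b a (X Y : 'M[k]_(dim M b)) :
  adj b a -> is_sink p b ->
  (X :&: Y == (0 : 'M_(dim M b)))%MS -> (X + Y == 1%:M)%MS ->
  (arr M a b <= X)%MS ->
  (forall j, nb b j != a -> (arr M (nb b j) b <= Y)%MS) ->
  dim M a != 0%N -> forall c, adj b c -> c != a -> dim M c = 0%N.
Proof.
case: Mind => _ Msplit Hba Sb XY0 XY1 Ha Ho da c Hbc ca.
pose atb (Z : 'M[k]_(dim M b)) (Z' : forall v, 'M[k]_(dim M v)) v :
  'M[k]_(dim M v) := if v == b then \matrix_(r, s) mxe Z r s else Z' v.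
pose U v := if branch b a v then 1%:M else atb X (fun _ => 0) v.
pose W v := if branch b a v then 0 else atb Y (fun _ => 1%:M) v.
have atbE Z Z' : atb Z Z' b = Z by rewrite /atb eqxx mxe_id.
have dim0 (v : vert n) : (1%:M : 'M[k]_(dim M v)) = 0 -> dim M v = 0%N.
  by move=> E; have := mxrank1 k (dim M v); rewrite E mxrank0.
case: (Msplit U W) => [x y Hxy|v|/(_ a)|/(_ c)].
- have xb : x != b by apply: contraTneq (arrow_source Hxy) => ->; rewrite negbK.
  have Axy : adj x y by case/andP: Hxy.
  rewrite /U /W.
  case: (boolP (branch b a x)) => Sx; case: (boolP (branch b a y)) => Sy.
  + by rewrite mul0mx sub0mx submx1.
  + have [-> ->] := branch_exit Hba Axy Sx Sy.
    by rewrite mul1mx atbE Ha mul0mx sub0mx.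
  + have [_ Ex] := branch_exit Hba (etrans (adjC y x) Axy) Sy Sx.
    by rewrite Ex eqxx in xb.
  + rewrite /atb (negbTE xb) mul0mx sub0mx mul1mx; split=> //.
    case: (eqVneq y b) => [Eyb|_]; last by rewrite submx1.
    subst y; rewrite mxe_id; have [j Ej] := adj_nb (etrans (adjC b x) Axy).
    rewrite Ej; apply: Ho; rewrite -Ej.
    by apply: contraNneq Sx => ->; exact: branch_self.
- rewrite /U /W; case: (boolP (branch b a v)) => Sv.
    by rewrite capmx0 addsmx0_id !submx_refl.
  case: (eqVneq v b) => [->|vb]; first by rewrite !atbE XY0.
  by rewrite /atb (negbTE vb) cap0mx adds0mx_id !submx_refl.
- by rewrite /U (branch_self Hba) => /dim0 E; rewrite E in da.
rewrite /W /atb (negbTE (branch_nb Hba Hbc ca)) eq_sym (negbTE (adj_neq Hbc)).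
exact: dim0.
Qed.

Lemma sink_dim_neq0 b u w :
  is_sink p b -> adj b u -> adj b w -> w != u ->
  dim M u != 0%N -> dim M w != 0%N -> dim M b != 0%N.
Proof.
move=> Sb Abu Abw wu du /eqP dw; apply/eqP => db; apply: dw.
have thin := submx_dim0 db.
apply: (@indecomposable_sink_split b u 0 0) => //; apply/andP; split; exact: thin.
Qed.

Lemma sink_ker_neq0 b u w :
  is_sink p b -> adj b u -> adj b w -> w != u ->
  dim M u != 0%N -> dim M w != 0%N -> \rank (kermx (inmap M b)) != 0%N.
Proof.
move=> Sb Abu Abw wu du /eqP dw; apply/eqP => ker0; apply: dw.
have [j Ej] := adj_nb Abu.
pose G i := <<arr M (nb b i) b>>%MS.
pose O := (\sum_(i | i != j) G i)%MS.
have rk_inmap : \rank (inmap M b) = (\sum_i dim M (nb b i))%N.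
  move: ker0; rewrite mxrank_ker => /eqP; rewrite subn_eq0 => H.
  by apply/eqP; rewrite eqn_leq rank_leq_row H.
have rk_GO : \rank (G j + O)%MS = (\sum_i dim M (nb b i))%N.
  by rewrite -rk_inmap /inmap eqmx_col (bigD1 j).
have GO0 : (G j :&: O <= (0 : 'M_(dim M b)))%MS.
  rewrite -(geq_leqif (mxrank_adds_leqif _ _)) rk_GO (bigD1 j) //=.
  apply: leq_add; first by rewrite genmxE rank_leq_row.
  apply: leq_trans (mxrank_sumsmx_leq _ _) _; apply: leq_sum => i _.
  by rewrite genmxE rank_leq_row.
have [Y [OY GY0 GY1]] := disjoint_compl GO0.
apply: (indecomposable_sink_split Abu Sb GY0 GY1 _ _ du Abw wu).
  by rewrite Ej genmxE.
move=> i ne; apply: submx_trans OY; apply: (sumsmx_sup i).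
  by apply: contraNneq ne => ->; rewrite Ej.
by rewrite genmxE.
Qed.

End Indecomposable.

Section Sigma.
Variables (n : nat) (k : fieldType) (p : bool) (M : rep n k p).
Implicit Types (a b v x y : vert n) (l m : seq (vert n)).

Lemma sigma_dim_source v : is_source p v -> dim (sigma M) v = dim M v.
Proof. by move=> Sv; rewrite /= /sig_dim (negbTE Sv). Qed.

Lemma sigma_dim_sink v :
  is_sink p v -> dim (sigma M) v = \rank (kermx (inmap M v)).
Proof. by move=> Sv; rewrite /= /sig_dim Sv. Qed.

Lemma sigma_dim_neq0_sink v :
  dim (sigma M) v != 0%N -> dim M v = 0%N -> is_sink p v.
Proof.
by move=> dv dMv; apply: contraT => Sv; move: dv; rewrite sigma_dim_source ?dMv.
Qed.

Lemma sigma_dim_fresh b a :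
  is_sink p b -> adj b a -> dim M b = 0%N -> dim M a != 0%N ->
  dim (sigma M) b != 0%N.
Proof.
move=> Sb /adj_nb[i ->] db da; rewrite sigma_dim_sink // mxrank_ker.
have : (\rank (inmap M b) <= 0)%N by rewrite -{2}db rank_leq_col.
rewrite leqn0 => /eqP ->.
by rewrite subn0 -lt0n (bigD1 i) //= addn_gt0 lt0n da.
Qed.

Lemma sigma_dim_nb v :
  is_sink p v -> dim (sigma M) v != 0%N -> exists i, dim M (nb v i) != 0%N.
Proof.
move=> Sv; rewrite sigma_dim_sink // => dv.
apply/existsP; apply: contraNT dv; rewrite negb_exists => /forallP dnb.
rewrite -leqn0; apply: leq_trans (rank_leq_row _) _.
by rewrite leqn0 sum_nat_eq0; apply/forallP => i; rewrite -[_ == _]negbK dnb.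
Qed.

Lemma fin_dim_sigma : fin_dim M -> fin_dim (sigma M).
Proof.
case=> s Hs.
exists (s ++ flatten [seq [seq nb x i | i <- enum 'I_n] | x <- s]) => v Hv.
rewrite mem_cat; case: (boolP (is_sink p v)) => Sv; last first.
  by rewrite Hs // -(sigma_dim_source Sv).
have [i Hi] := sigma_dim_nb Sv Hv.
have [j Ej] := adj_nb (etrans (adjC _ _) (nb_adj v i)).
apply/orP; right; apply/flatten_mapP; exists (nb v i); first exact: Hs.
by rewrite {1}Ej; apply/mapP; exists j; rewrite ?mem_enum.
Qed.

Hypothesis Mind : indecomposable M.

Lemma sigma_dim_sink_neq0 b u w :
  is_sink p b -> adj b u -> adj b w -> w != u ->
  dim M u != 0%N -> dim M w != 0%N -> dim (sigma M) b != 0%N.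
Proof.
move=> Sb Abu Abw wu du dw.
by rewrite sigma_dim_sink // (sink_ker_neq0 Mind Sb Abu Abw wu du dw).
Qed.

Lemma sigma_path_interior l i :
  path_in (sigma M) l -> 0 < i -> i.+1 < size l ->
  dim M (nth (root n) l i) != 0%N.
Proof.
move=> /andP[T /allP nz] i0 il.
have [Au Aw wu] := tpath_nbrs T i0 il.
have nz_nb j : (j < size l)%N -> adj (nth (root n) l i) (nth (root n) l j) ->
    is_sink p (nth (root n) l i) -> dim M (nth (root n) l j) != 0%N.
  move=> jl A Sv; rewrite -sigma_dim_source.
    by apply: nz; rewrite mem_nth.
  by rewrite /is_source (sink_adj _ A) Sv.
case: (boolP (is_sink p (nth (root n) l i))) => Sv; last first.
  by rewrite -sigma_dim_source //; apply: nz; rewrite mem_nth // ltnW.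
by apply: (sink_dim_neq0 Mind Sv Au Aw wu); apply: nz_nb => //; lia.
Qed.

Lemma path_in_sigma_inner x m y :
  path_in (sigma M) (x :: rcons m y) -> 0 < size m -> path_in M m.
Proof.
move=> Hl m0; rewrite /path_in; apply/andP; split.
  case/andP: Hl => /tpath_behead T _.
  by apply: (tpath_rconsK (y := y)) _ m0; apply: T; rewrite size_rcons.
apply/allP => v /(nthP (root n)) [i im <-].
have := sigma_path_interior (i := i.+1) Hl; rewrite /= nth_rcons im.
by apply=> //; rewrite size_rcons !ltnS.
Qed.

Lemma sigma_path_size d l :
  (forall l', path_in M l' -> size l' <= d) -> path_in (sigma M) l ->
  size l <= d.+2.
Proof.
move=> Mmax; case: l => [|x l] //; case/lastP: l => [|m y] // Hl.
rewrite /= size_rcons !ltnS; case: (posnP (size m)) => [-> // | m0].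
exact/Mmax/(path_in_sigma_inner Hl m0).
Qed.

Lemma sigma_path_long x m y :
  (forall l, path_in M l -> size l <= size m) ->
  path_in (sigma M) (x :: rcons m y) -> 0 < size m ->
  [/\ is_diam M m, is_sink p x & is_sink p y].
Proof.
move=> mmax Hl m0.
have mdiam : is_diam M m.
  by split; [exact: path_in_sigma_inner Hl m0 | exact: mmax].
case/andP: Hl => T /allP nz; split=> //; apply: sigma_dim_neq0_sink.
- by apply: nz; rewrite mem_head.
- apply: diam_cons_dim0 mdiam _.
  exact: (tpath_rconsK (l := x :: m) (y := y)) T _.
- by apply: nz; rewrite inE mem_rcons mem_head orbT.
by apply: diam_rcons_dim0 mdiam _; apply: tpath_behead T _; rewrite size_rcons.
Qed.

Lemma sigma_keeps_path l :
  path_in M l -> is_source p (head (root n) l) -> is_source p (last (root n) l) ->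
  all (fun v => dim (sigma M) v != 0%N) l.
Proof.
move=> /andP[T /allP nz] Sh Sl; apply/allP => v /(nthP (root n)) [i il <-].
case: (boolP (is_sink p (nth (root n) l i))) => Sv; last first.
  by rewrite sigma_dim_source // nz // mem_nth.
have i0 : 0 < i by case: i il Sv => // _; rewrite nth0 (negbTE Sh).
have il' : i.+1 < size l.
  rewrite ltn_neqAle il andbT; apply: contraTneq Sv => Ei.
  by rewrite (_ : i = (size l).-1) ?nth_last //; lia.
have [Au Aw wu] := tpath_nbrs T i0 il'.
by apply: (sigma_dim_sink_neq0 Sv Au Aw wu); apply: nz; rewrite mem_nth //; lia.
Qed.

Lemma sigma_path_extend (hn : 1 < n) l0 :
  is_diam M l0 -> is_source p (head (root n) l0) ->
  is_source p (last (root n) l0) ->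
  exists2 L, path_in (sigma M) L & size L = (size l0).+2.
Proof.
move=> l0diam Sh Sl; have [/andP[T /allP nz_end] _] := l0diam.
have l0n0 : 0 < size l0 by case/tpathP: T.
have [b0 [be [Text A0 Ae]]] := tpath_extend hn T.
exists (b0 :: rcons l0 be); last by rewrite /= size_rcons.
rewrite /path_in Text /= all_rcons sigma_keeps_path ?andbT //; last exact: l0diam.1.
apply/andP; split.
  apply: sigma_dim_fresh (etrans (adjC _ _) A0) _ _.
  - by rewrite (sink_adj _ A0).
  - apply: diam_cons_dim0 l0diam _.
    exact: (tpath_rconsK (l := b0 :: l0) (y := be)) Text _.
  by apply: nz_end; rewrite -nth0 mem_nth.
apply: sigma_dim_fresh (etrans (adjC _ _) Ae) _ _.
- by rewrite (sink_adj _ Ae).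
- apply: diam_rcons_dim0 l0diam _.
  by apply: tpath_behead Text _; rewrite size_rcons.
by apply: nz_end; rewrite -nth_last mem_nth // prednK.
Qed.

Lemma sigma_diam (hn : 1 < n) l0 :
  is_diam M l0 -> is_source p (head (root n) l0) ->
  is_source p (last (root n) l0) ->
  (exists l, is_diam (sigma M) l) /\
  forall l, is_diam (sigma M) l -> size l = (size l0).+2.
Proof.
move=> l0diam Sh Sl; have [L LM Ls] := sigma_path_extend hn l0diam Sh Sl.
have bound l : path_in (sigma M) l -> size l <= (size l0).+2.
  exact: sigma_path_size (proj2 l0diam).
split; first by exists L; split=> // l /bound; rewrite Ls.
by move=> l [lM lmax]; apply/eqP; rewrite eqn_leq bound //= -Ls lmax.
Qed.

Lemma sigma_long_path_shape l0 l :
  is_diam M l0 -> path_in (sigma M) l -> size l = (size l0).+2 ->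
  exists x m y, [/\ l = x :: rcons m y, is_diam M m, is_sink p x & is_sink p y].
Proof.
move=> [/andP[T _] l0max] lM; case: l lM => [|x l] //; case/lastP: l => [|m y] //.
move=> lM /= [/eqP]; rewrite size_rcons eqSS => /eqP sm; exists x, m, y.
have m0 : 0 < size m by rewrite sm; case/tpathP: T.
have mmax l : path_in M l -> size l <= size m by rewrite sm; exact: l0max.
by have [] := sigma_path_long mmax lM m0.
Qed.

End Sigma.

Theorem mainTheorem9 (k : fieldType) (n : nat) (hn : (3 <= n)%N) (p : bool)
  (M : rep n k p) (c : vert n) (r : nat) :
  fin_dim M -> regular M -> source_module M -> center_radius M c r ->
  source_module (sigma M) /\ center_radius (sigma M) c r.+1.
Proof.
move=> Mfin [Mind _] [_ [l0 l0diam] l0src] Mcr.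
have [l0size _] := Mcr l0 l0diam.
have /andP[Sh Sl] := l0src l0 l0diam.
have [diam_ex diam_size] := sigma_diam Mind (ltnW hn) l0diam Sh Sl.
have shape l (ldiam : is_diam (sigma M) l) :=
  sigma_long_path_shape Mind l0diam (proj1 ldiam) (diam_size l ldiam).
split.
  split=> [|//|l /shape[x [m [y [-> _ Sx Sy]]]]]; first exact: fin_dim_sigma.
  by rewrite /= last_rcons !is_source_negb Sx Sy.
move=> l ldiam; split; first by rewrite diam_size // l0size mulnS.
have [x [m [y [-> mdiam _ _]]]] := shape l ldiam.
have [msize mc] := Mcr m mdiam.
have r_lt : (r < size m)%N by rewrite msize ltnS leq_pmull.
by rewrite /= nth_rcons r_lt.
Qed.
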